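(* Let $S$ be an inverse semigroup. Then every inverse subsemigroup of $S\times S$ containing the diagonal $\{(s,s)\colon s\in S\}$ is a congruence on $S$ if and only if $S$ is a group.
   Context: An inverse semigroup is a semigroup in which every element $s$ has a unique inverse $s^{-1}$, i.e. unique $t$ with $sts=s$, $tst=t$; an inverse subsemigroup is a subsemigroup closed under taking inverses ($S\times S$ is inverse with componentwise inverses). A congruence on $S$ is an equivalence relation on $S$ which is a subsemigroup of $S\times S$. *)

Section InvSemigroup.
Variables (S : Type) (mul : S -> S -> S).

Definition associative_op : Prop :=
  forall x y z, mul x (mul y z) = mul (mul x y) z.

Definition is_inv (s t : S) : Prop :=
  mul (mul s t) s = s /\ mul (mul t s) t = t.

Definition inverse_semigroup : Prop :=
  associative_op /\ forall s, exists! t, is_inv s t.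

Definition subsemigroup_prod (R : S -> S -> Prop) : Prop :=
  forall a b c d, R a b -> R c d -> R (mul a c) (mul b d).

Definition inverse_subsemigroup_prod (R : S -> S -> Prop) : Prop :=
  subsemigroup_prod R /\
  forall a b a' b', R a b -> is_inv a a' -> is_inv b b' -> R a' b'.

Definition contains_diagonal (R : S -> S -> Prop) : Prop := forall s, R s s.

Definition equivalence_rel (R : S -> S -> Prop) : Prop :=
  (forall x, R x x) /\ (forall x y, R x y -> R y x) /\
  (forall x y z, R x y -> R y z -> R x z).

Definition congruence (R : S -> S -> Prop) : Prop :=
  equivalence_rel R /\ subsemigroup_prod R.

Definition is_group : Prop :=
  exists e, (forall x, mul e x = x /\ mul x e = x) /\
            (forall x, exists y, mul x y = e /\ mul y x = e).

End InvSemigroup.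

Arguments associative_op {S} mul.
Arguments is_inv {S} mul s t.
Arguments inverse_semigroup {S} mul.
Arguments subsemigroup_prod {S} mul R.
Arguments inverse_subsemigroup_prod {S} mul R.
Arguments contains_diagonal {S} R.
Arguments equivalence_rel {S} R.
Arguments congruence {S} mul R.
Arguments is_group {S} mul.

(* In a group, an inverse subsemigroup R of S x S containing the diagonal is
   symmetric, since (y,y)(x^-1,y^-1)(x,x) = (y,x), and transitive, since
   (x,y)(y^-1,y^-1)(y,z) = (x,z).  Conversely, the natural partial order
   (a <= b iff a = e b for an idempotent e) is an inverse subsemigroup of
   S x S containing the diagonal.  If it is a congruence it is symmetric; then
   e f <= f gives f <= e f, which forces e f = f for all idempotents e, f.  So
   S has a single idempotent, and an inverse semigroup with a single
   idempotent is a group. *)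


Lemma is_inv_sym {S : Type} (mul : S -> S -> S) (s t : S) :
  is_inv mul s t -> is_inv mul t s.
Proof. intros [H1 H2]; split; assumption. Qed.

Definition idempotent {S : Type} (mul : S -> S -> S) (e : S) : Prop :=
  mul e e = e.

Lemma idempotent_is_inv {S : Type} (mul : S -> S -> S) (e : S) :
  idempotent mul e -> is_inv mul e e.
Proof. unfold idempotent; intro He; split; rewrite !He; reflexivity. Qed.

Section InverseSemigroup.

Variables (S : Type) (mul : S -> S -> S).
Hypothesis assoc : associative_op mul.

Lemma is_inv_idempotent (x y : S) : is_inv mul x y -> idempotent mul (mul x y).
Proof. intros [H1 _]; unfold idempotent; rewrite assoc, H1; reflexivity. Qed.

Lemma is_inv_idempotent_r (x y : S) : is_inv mul x y -> idempotent mul (mul y x).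
Proof. intro H; apply is_inv_idempotent, is_inv_sym, H. Qed.

Lemma group_inverse_subsemigroup_congruence (R : S -> S -> Prop) :
  is_group mul -> inverse_subsemigroup_prod mul R -> contains_diagonal R ->
  congruence mul R.
Proof.
  intros [e [He Hinv]] [Hmul Hinvcl] Hdiag.
  assert (inv_of_unit : forall x y, mul x y = e -> mul y x = e -> is_inv mul x y).
  { intros x y H1 H2; split; [rewrite H1 | rewrite H2]; apply He. }
  split; [split; [exact Hdiag | split] | exact Hmul].
  - intros x y Hxy.
    destruct (Hinv x) as [x' [X1 X2]], (Hinv y) as [y' [Y1 Y2]].
    pose proof (Hinvcl _ _ _ _ Hxy (inv_of_unit _ _ X1 X2) (inv_of_unit _ _ Y1 Y2))
      as Hx'y'.
    pose proof (Hmul _ _ _ _ (Hmul _ _ _ _ (Hdiag y) Hx'y') (Hdiag x)) as Hyx.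
    rewrite <- (assoc y x' x), X2, Y1, (proj2 (He y)), (proj1 (He x)) in Hyx.
    exact Hyx.
  - intros x y z Hxy Hyz.
    destruct (Hinv y) as [y' [Y1 Y2]].
    pose proof (Hmul _ _ _ _ (Hmul _ _ _ _ Hxy (Hdiag y')) Hyz) as Hxz.
    rewrite <- (assoc x y' y), Y2, Y1, (proj2 (He x)), (proj1 (He z)) in Hxz.
    exact Hxz.
Qed.

Hypothesis inv_unique : forall s, exists! t, is_inv mul s t.

Lemma is_inv_unique (s t t' : S) : is_inv mul s t -> is_inv mul s t' -> t = t'.
Proof.
  intros Ht Ht'; destruct (inv_unique s) as [u [_ Hu]].
  rewrite <- (Hu t Ht), <- (Hu t' Ht'); reflexivity.
Qed.

(* If x is the inverse of e f, then f x e is another inverse, so x = f x e is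
   idempotent, and e f, being the inverse of the idempotent x, equals x. *)
Lemma idempotent_mul (e f : S) :
  idempotent mul e -> idempotent mul f -> idempotent mul (mul e f).
Proof.
  unfold idempotent; intros He Hf.
  destruct (inv_unique (mul e f)) as [x [[H1 H2] _]].
  assert (Hx : mul f (mul x e) = x).
  { apply (is_inv_unique (mul e f)); [split | split; assumption].
    - replace (mul (mul (mul e f) (mul f (mul x e))) (mul e f))
        with (mul (mul (mul e (mul f f)) x) (mul (mul e e) f))
        by (rewrite !assoc; reflexivity).
      rewrite He, Hf; exact H1.
    - replace (mul (mul (mul f (mul x e)) (mul e f)) (mul f (mul x e)))
        with (mul f (mul (mul (mul x (mul (mul e e) (mul f f))) x) e))
        by (rewrite !assoc; reflexivity).
      rewrite He, Hf, H2; reflexivity. }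
  assert (Hxx : mul x x = x).
  { transitivity (mul (mul f (mul x e)) (mul f (mul x e))); [rewrite Hx; reflexivity |].
    replace (mul (mul f (mul x e)) (mul f (mul x e)))
      with (mul f (mul (mul (mul x (mul e f)) x) e))
      by (rewrite !assoc; reflexivity).
    rewrite H2; exact Hx. }
  assert (Hef : mul e f = x).
  { apply (is_inv_unique x); [apply is_inv_sym; split; assumption |].
    apply idempotent_is_inv; exact Hxx. }
  rewrite Hef; exact Hxx.
Qed.

Lemma idempotent_comm (e f : S) :
  idempotent mul e -> idempotent mul f -> mul e f = mul f e.
Proof.
  intros He Hf.
  pose proof (idempotent_mul e f He Hf) as Hef.
  pose proof (idempotent_mul f e Hf He) as Hfe.
  unfold idempotent in *.
  apply (is_inv_unique (mul e f)); [apply idempotent_is_inv; exact Hef | split].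
  - replace (mul (mul (mul e f) (mul f e)) (mul e f))
      with (mul (mul e (mul f f)) (mul (mul e e) f)) by (rewrite !assoc; reflexivity).
    rewrite He, Hf; exact Hef.
  - replace (mul (mul (mul f e) (mul e f)) (mul f e))
      with (mul (mul f (mul e e)) (mul (mul f f) e)) by (rewrite !assoc; reflexivity).
    rewrite He, Hf; exact Hfe.
Qed.

Lemma is_inv_idempotent_mul (e b b' : S) :
  idempotent mul e -> is_inv mul b b' -> is_inv mul (mul e b) (mul b' e).
Proof.
  intros He Hb; pose proof Hb as [B1 B2].
  pose proof (idempotent_comm e (mul b b') He (is_inv_idempotent b b' Hb)) as C.
  unfold idempotent in He; split.
  - replace (mul (mul (mul e b) (mul b' e)) (mul e b))
      with (mul (mul e (mul b b')) (mul (mul e e) b)) by (rewrite !assoc; reflexivity).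
    rewrite He, C.
    replace (mul (mul (mul b b') e) (mul e b))
      with (mul (mul b b') (mul (mul e e) b)) by (rewrite !assoc; reflexivity).
    rewrite He, assoc, <- C, <- assoc, B1; reflexivity.
  - replace (mul (mul (mul b' e) (mul e b)) (mul b' e))
      with (mul b' (mul (mul e e) (mul (mul b b') e))) by (rewrite !assoc; reflexivity).
    rewrite He, <- C, (assoc e e), He, C, (assoc b' (mul b b') e), (assoc b' b b'), B2.
    reflexivity.
Qed.

Definition natural_le (a b : S) : Prop := exists e, idempotent mul e /\ a = mul e b.

Lemma natural_le_refl (a : S) : natural_le a a.
Proof.
  destruct (inv_unique a) as [a' [Ha _]].
  exists (mul a a'); split; [exact (is_inv_idempotent a a' Ha) | symmetry; apply Ha].
Qed.

Lemma natural_le_mul : subsemigroup_prod mul natural_le.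
Proof.
  intros a b c d [e [He ->]] [f [Hf ->]].
  destruct (inv_unique b) as [b' [Hb _]]; pose proof Hb as [B1 _].
  pose proof (idempotent_comm f (mul b' b) Hf (is_inv_idempotent_r b b' Hb)) as C.
  assert (Hbfb' : idempotent mul (mul b (mul f b'))).
  { unfold idempotent in *.
    replace (mul (mul b (mul f b')) (mul b (mul f b')))
      with (mul b (mul (mul f (mul b' b)) (mul f b'))) by (rewrite !assoc; reflexivity).
    rewrite C.
    replace (mul b (mul (mul (mul b' b) f) (mul f b')))
      with (mul (mul (mul b b') b) (mul (mul f f) b')) by (rewrite !assoc; reflexivity).
    rewrite B1, Hf, !assoc; reflexivity. }
  exists (mul e (mul b (mul f b'))); split; [exact (idempotent_mul _ _ He Hbfb') |].
  replace (mul (mul e (mul b (mul f b'))) (mul b d))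
    with (mul (mul e b) (mul (mul f (mul b' b)) d)) by (rewrite !assoc; reflexivity).
  rewrite C.
  replace (mul (mul e b) (mul (mul (mul b' b) f) d))
    with (mul e (mul (mul (mul b b') b) (mul f d))) by (rewrite !assoc; reflexivity).
  rewrite B1, !assoc; reflexivity.
Qed.

Lemma natural_le_inv (a b a' b' : S) :
  natural_le a b -> is_inv mul a a' -> is_inv mul b b' -> natural_le a' b'.
Proof.
  intros [e [He ->]] Ha' Hb; pose proof Hb as [B1 B2].
  rewrite (is_inv_unique _ _ _ Ha' (is_inv_idempotent_mul e b b' He Hb)).
  pose proof (idempotent_comm e (mul b b') He (is_inv_idempotent b b' Hb)) as C.
  unfold idempotent in He.
  exists (mul b' (mul e b)); split.
  - unfold idempotent.
    replace (mul (mul b' (mul e b)) (mul b' (mul e b)))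
      with (mul b' (mul (mul e (mul b b')) (mul e b))) by (rewrite !assoc; reflexivity).
    rewrite C.
    replace (mul b' (mul (mul (mul b b') e) (mul e b)))
      with (mul (mul (mul b' b) b') (mul (mul e e) b)) by (rewrite !assoc; reflexivity).
    rewrite B2, He; reflexivity.
  - replace (mul (mul b' (mul e b)) b') with (mul b' (mul e (mul b b')))
      by (rewrite !assoc; reflexivity).
    rewrite C, !assoc, B2; reflexivity.
Qed.

Lemma natural_le_inverse_subsemigroup : inverse_subsemigroup_prod mul natural_le.
Proof. split; [exact natural_le_mul | exact natural_le_inv]. Qed.

(* From f <= e f and e f <= f we get f = g e f, so e f = e g e f = g e f = f. *)
Lemma natural_le_sym_idempotent_mul (e f : S) :
  (forall a b, natural_le a b -> natural_le b a) ->
  idempotent mul e -> idempotent mul f -> mul e f = f.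
Proof.
  intros Hsym He Hf.
  destruct (Hsym (mul e f) f) as [g [Hg Hfg]]; [exists e; split; auto |].
  transitivity (mul e (mul g (mul e f))); [rewrite <- Hfg; reflexivity |].
  replace (mul e (mul g (mul e f))) with (mul (mul e g) (mul e f))
    by (rewrite !assoc; reflexivity).
  rewrite (idempotent_comm e g He Hg).
  replace (mul (mul g e) (mul e f)) with (mul g (mul (mul e e) f))
    by (rewrite !assoc; reflexivity).
  unfold idempotent in He; rewrite He; symmetry; exact Hfg.
Qed.

Lemma natural_le_sym_idempotent_eq (e f : S) :
  (forall a b, natural_le a b -> natural_le b a) ->
  idempotent mul e -> idempotent mul f -> e = f.
Proof.
  intros Hsym He Hf.
  rewrite <- (natural_le_sym_idempotent_mul f e Hsym Hf He), (idempotent_comm f e Hf He).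
  exact (natural_le_sym_idempotent_mul e f Hsym He Hf).
Qed.

Lemma is_group_of_unique_idempotent :
  inhabited S -> (forall e f, idempotent mul e -> idempotent mul f -> e = f) ->
  is_group mul.
Proof.
  intros [s] Huniq.
  destruct (inv_unique s) as [s' [Hs _]].
  assert (HE : forall x x', is_inv mul x x' -> mul x x' = mul s s' /\ mul x' x = mul s s').
  { intros x x' Hx; split; apply Huniq;
      auto using is_inv_idempotent, is_inv_idempotent_r. }
  exists (mul s s'); split; intro x; destruct (inv_unique x) as [x' [Hx _]];
    destruct (HE x x' Hx) as [E1 E2].
  - split; [rewrite <- E1 | rewrite <- E2, assoc]; apply Hx.
  - exists x'; split; assumption.
Qed.

End InverseSemigroup.

Theorem mainTheorem9 (S : Type) (mul : S -> S -> S)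
  (HS : inverse_semigroup mul) (Hne : inhabited S) :
  (forall R : S -> S -> Prop,
     inverse_subsemigroup_prod mul R -> contains_diagonal R -> congruence mul R)
  <-> is_group mul.
Proof.
  destruct HS as [assoc inv_unique]; split.
  - intro Hcong.
    destruct (Hcong _ (natural_le_inverse_subsemigroup _ _ assoc inv_unique)
                      (natural_le_refl _ _ assoc inv_unique)) as [[_ [Hsym _]] _].
    apply (is_group_of_unique_idempotent _ _ assoc inv_unique Hne).
    intros e f; exact (natural_le_sym_idempotent_eq _ _ assoc inv_unique e f Hsym).
  - intros Hgroup R HR Hdiag.
    exact (group_inverse_subsemigroup_congruence S mul assoc R Hgroup HR Hdiag).
Qed.
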